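(* For each elementary cellular automaton $F$ with rule number in $\{0, 1, 2, 4, 8, 10, 12, 19, 24, 34, 36, 38, 42, 46, 72, 76, 108, 127, 138, 200\}$, the deterministic communication complexity $D(\textsc{Pred}_{F,n})$ is $O(1)$, i.e. bounded by a constant independent of $n$.
   Context: An elementary cellular automaton (ECA) with rule number $N\in\{0,\dots,255\}$ is the map $F:\{0,1\}^{\mathbb Z}\to\{0,1\}^{\mathbb Z}$ given by $F(x)_i=f(x_{i-1},x_i,x_{i+1})$. Here the local rule $f:\{0,1\}^3\to\{0,1\}$ is determined by $N=\sum_{a,b,c\in\{0,1\}}2^{4a+2b+c}f(a,b,c)$. On a finite word of length $m\ge 3$, $F$ produces the word of length $m-2$ obtained by applying $f$ at every position whose full neighbourhood lies in the word. For $n\ge1$, $\textsc{Pred}_{F,n}:\{0,1\}^{2n+1}\to\{0,1\}$ maps a word $x=x_{-n}\cdots x_n$ to the single letter of $F^n(x)$, i.e. the state of the central cell after $n$ steps. For a function $g:X\times Y\to Z$, $D(g)$ is the minimal depth of a deterministic two-party protocol computing $g$. In such a protocol, Alice knows $x$ and Bob knows $y$. The protocol is a binary tree: each internal node is labelled by a function of Alice's input only or of Bob's input only, with values in $\{\text{left},\text{right}\}$, and each leaf is labelled by an output value. For $g:\{0,1\}^m\to Z$, set $D(g)=\max_{0\le i<m}D(g_i)$, where $g_i:\{0,1\}^i\times\{0,1\}^{m-i}\to Z$ is $g_i(x,y)=g(xy)$. *)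

From mathcomp Require Import all_boot.
Set Implicit Arguments. Unset Strict Implicit. Unset Printing Implicit Defensive.

Definition eca_local (N : nat) (a b c : bool) : bool :=
  odd (N %/ 2 ^ (4 * a + 2 * b + c)).

(* One step of F on a finite word: length m >= 3 gives length m - 2
   (applying f at every position with a full neighbourhood); shorter words
   give the empty word. *)
Fixpoint eca_step (N : nat) (w : seq bool) : seq bool :=
  match w with
  | a :: ((b :: c :: _) as t) => eca_local N a b c :: eca_step N t
  | _ => [::]
  end.

(* Pred_{F,n}(x) = the single letter of F^n(x), for x of length 2n+1. *)
Definition pred_eca (N n : nat) (x : seq bool) : bool :=
  head false (iter n (eca_step N) x).

(* Deterministic two-party protocol trees: internal nodes are labelled by a
   function of Alice's input or of Bob's input (true = left, false = right),
   leaves by output values. *)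
Inductive protocol (X Y Z : Type) : Type :=
| PLeaf of Z
| PAlice of (X -> bool) & protocol X Y Z & protocol X Y Z
| PBob of (Y -> bool) & protocol X Y Z & protocol X Y Z.

Fixpoint prot_eval X Y Z (P : protocol X Y Z) (x : X) (y : Y) : Z :=
  match P with
  | PLeaf z => z
  | PAlice a l r => if a x then prot_eval l x y else prot_eval r x y
  | PBob b l r => if b y then prot_eval l x y else prot_eval r x y
  end.

Fixpoint prot_depth X Y Z (P : protocol X Y Z) : nat :=
  match P with
  | PLeaf _ => 0
  | PAlice _ l r => (maxn (prot_depth l) (prot_depth r)).+1
  | PBob _ l r => (maxn (prot_depth l) (prot_depth r)).+1
  end.

Definition D_le X Y Z (g : X -> Y -> Z) (d : nat) : Prop :=
  exists P : protocol X Y Z, prot_depth P <= d /\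
    forall x y, prot_eval P x y = g x y.

(* For g on {0,1}^m: D(g) <= d iff D(g_i) <= d for all 0 <= i < m, where
   g_i(x,y) = g(xy), x in {0,1}^i, y in {0,1}^(m-i). *)
Definition D_word_le (m : nat) (g : seq bool -> bool) (d : nat) : Prop :=
  forall i : 'I_m,
    D_le (fun (x : i.-tuple bool) (y : (m - i).-tuple bool) => g (x ++ y)) d.

Definition rule_list : seq nat :=
  [:: 0; 1; 2; 4; 8; 10; 12; 19; 24; 34; 36; 38; 42; 46; 72; 76; 108; 127;
      138; 200].

(* For each of these rules, once [delay] steps have passed, the central cell
   of F^n(x) is a fixed function of a window of [width] consecutive cells of x;
   the window drifts by [speed - 1] cells per step and the function depends
   only on the parity of n.  This invariant propagates from one step to the
   next as soon as it holds on every word of length [width + 2], so it follows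
   from two finite checks, done by computation on a certificate per rule.  A
   function of a window of width k has a protocol of depth k + 1: Alice sends
   the window bits she holds and Bob answers. *)

From mathcomp Require Import all_boot zify.
From Stdlib Require Import BinNat.

Set Implicit Arguments. Unset Strict Implicit. Unset Printing Implicit Defensive.

Definition window (p k : nat) (w : seq bool) : seq bool := take k (drop p w).

Lemma size_window p k w : p + k <= size w -> size (window p k w) = k.
Proof. by move=> fits; rewrite size_take size_drop; case: ltnP; lia. Qed.

Lemma window_window p k p' k' w :
  p' + k' <= k -> window p' k' (window p k w) = window (p + p') k' w.
Proof.
move=> fits; rewrite /window take_drop take_takel; last by rewrite addnC.
by rewrite -take_drop drop_drop addnC.
Qed.

Lemma window_mkseq p k w :
  p + k <= size w -> window p k w = mkseq (fun j => nth false w (p + j)) k.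
Proof.
move=> fits; apply: (@eq_from_nth _ false) => [|j]; rewrite size_window //.
  by rewrite size_mkseq.
by move=> ltjk; rewrite nth_take // nth_drop nth_mkseq.
Qed.

Lemma eca_step_short rule w : size w < 3 -> eca_step rule w = [::].
Proof. by case: w => [|a [|b [|c w]]]. Qed.

Lemma size_eca_step rule w : size (eca_step rule w) = size w - 2.
Proof. by elim: w => [|a [|b [|c w]] IH] //=; rewrite IH /= subnS. Qed.

Lemma eca_step_drop rule p w :
  eca_step rule (drop p w) = drop p (eca_step rule w).
Proof.
elim: w p => [|a w IH] [|p] /=; rewrite ?drop0 // {}IH.
by case: w => [|b [|c w]] //=; rewrite drop_nil.
Qed.

Lemma eca_step_take rule k w :
  eca_step rule (take k.+2 w) = take k (eca_step rule w).
Proof.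
elim: w k => [|a w IH] [|k] //.
  by rewrite take0 eca_step_short // size_take_min ltnS geq_minl.
by case: w IH => [|b [|c w]] IH //=; rewrite -IH.
Qed.

Lemma eca_step_window rule p k w :
  eca_step rule (window p k.+2 w) = window p k (eca_step rule w).
Proof. by rewrite /window eca_step_take eca_step_drop. Qed.

Lemma pred_ecaS rule n w : pred_eca rule n.+1 w = pred_eca rule n (eca_step rule w).
Proof. by rewrite /pred_eca iterSr. Qed.

Lemma D_le_mono X Y Z (g : X -> Y -> Z) d d' : d <= d' -> D_le g d -> D_le g d'.
Proof.
by move=> le_dd' [P [depthP evalP]]; exists P; split=> //; apply: leq_trans le_dd'.
Qed.

Lemma D_word_le_mono m g d d' : d <= d' -> D_word_le m g d -> D_word_le m g d'.
Proof. by move=> le_dd' g_d i; apply: D_le_mono le_dd' (g_d i). Qed.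

Lemma D_le_one_way X Y k (enc : X -> seq bool) (G : seq bool -> Y -> bool) :
  (forall x, size (enc x) = k) -> D_le (fun x y => G (enc x) y) k.+1.
Proof.
elim: k enc G => [|k IH] enc G size_enc.
  exists (PBob (G [::]) (PLeaf _ _ true) (PLeaf _ _ false)); split=> // x y /=.
  by move/eqP: (size_enc x); rewrite size_eq0 => /eqP ->; case: (G [::] y).
have size_tail x : size (behead (enc x)) = k by rewrite size_behead size_enc.
have [P1 [depth1 eval1]] := IH _ (fun s => G (true :: s)) size_tail.
have [P0 [depth0 eval0]] := IH _ (fun s => G (false :: s)) size_tail.
exists (PAlice (fun x => head false (enc x)) P1 P0); split.
  by rewrite /= ltnS geq_max depth1 depth0.
by move=> x y /=; rewrite eval1 eval0; case: (enc x) (size_enc x) => [|[] s].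
Qed.

Lemma D_word_le_window m g p k (G : seq bool -> bool) :
  p + k <= m -> (forall w, size w = m -> g w = G (window p k w)) ->
  D_word_le m g k.+1.
Proof.
move=> fits g_window i.
(* Alice sends the cells p, ..., p + k - 1 of x, padded with [false] beyond
   her part; Bob overwrites the padding with his own cells. *)
pose enc (x : i.-tuple bool) := mkseq (fun j => nth false x (p + j)) k.
pose merge s (y : (m - i).-tuple bool) :=
  mkseq (fun j => if p + j < i then nth false s j else nth false y (p + j - i)) k.
have [P [depthP evalP]] := @D_le_one_way _ _ k enc (fun s y => G (merge s y))
  (fun x => size_mkseq _ _).
exists P; split=> // x y; rewrite evalP.
have size_xy : size (x ++ y : seq bool) = m.
  by rewrite size_cat !size_tuple subnKC // ltnW.
rewrite g_window // window_mkseq ?size_xy //; congr G; apply/eq_in_map => j.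
rewrite mem_iota => /andP [_ ltjk]; rewrite nth_cat size_tuple.
by case: ifP => // _; rewrite nth_mkseq.
Qed.

Lemma D_word_le_trivial m g : D_word_le m g m.+1.
Proof.
apply: (@D_word_le_window m g 0 m g) => // w size_w.
by rewrite /window drop0 take_oversize ?size_w.
Qed.

Section MovingWindow.

Variables (rule delay width speed offset : nat) (phi : bool -> seq bool -> bool).
Hypothesis speed_le2 : speed <= 2.
Hypothesis window_fits : offset + width <= 2 * delay + 1.
Hypothesis phi_delay : forall w, size w = 2 * delay + 1 ->
  pred_eca rule delay w = phi (odd delay) (window offset width w).
Hypothesis phi_step : forall b u, size u = width.+2 ->
  phi b (eca_step rule u) = phi (~~ b) (window speed width u).

Lemma pred_eca_moving_window m w : size w = 2 * (delay + m) + 1 ->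
  pred_eca rule (delay + m) w =
  phi (odd (delay + m)) (window (offset + speed * m) width w).
Proof.
elim: m w => [|m IH] w size_w.
  by rewrite muln0 !addn0 in size_w *; apply: phi_delay.
have speed_m : speed * m <= 2 * m by rewrite leq_mul2r speed_le2 orbT.
rewrite addnS pred_ecaS IH; last by rewrite size_eca_step size_w; lia.
rewrite -eca_step_window phi_step; last by rewrite size_window //; lia.
by rewrite window_window ?mulnSr ?addnA //; lia.
Qed.

Lemma D_pred_eca_bounded :
  exists C, forall n, D_word_le (2 * n + 1) (pred_eca rule n) C.
Proof.
exists (maxn width.+1 (2 * delay).+2) => n.
have [lt_n_delay | le_delay_n] := ltnP n delay.
  apply: (D_word_le_mono _ (D_word_le_trivial _)); rewrite leq_max; lia.
apply: D_word_le_mono (leq_maxl _ _) _.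
rewrite -(subnKC le_delay_n); set m := n - delay.
have speed_m : speed * m <= 2 * m by rewrite leq_mul2r speed_le2 orbT.
apply: (D_word_le_window _ (@pred_eca_moving_window m)); lia.
Qed.

End MovingWindow.

Fixpoint bitseqs (m : nat) : seq bitseq :=
  if m is m'.+1 then map (cons true) (bitseqs m') ++ map (cons false) (bitseqs m')
  else [:: [::]].

Lemma bitseqs_complete s : s \in bitseqs (size s).
Proof. by elim: s => [|b s IH] //=; rewrite mem_cat; case: b; rewrite map_f ?orbT. Qed.

Lemma all_bitseqsP (P : pred bitseq) m s : all P (bitseqs m) -> size s = m -> P s.
Proof. by move=> /allP P_all size_s; apply: P_all; rewrite -size_s bitseqs_complete. Qed.

Definition nat_of_bits (s : bitseq) : nat := foldl (fun a (b : bool) => a.*2 + b) 0 s.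

Record certificate := Certificate {
  cert_delay : nat; cert_width : nat; cert_speed : nat; cert_offset : nat;
  cert_table_odd : N; cert_table_even : N }.

(* Bit i of a table is the value on the window whose binary value is i, most
   significant bit first, as in the numbering of rules. *)
Definition cert_phi (c : certificate) (b : bool) (s : bitseq) : bool :=
  N.testbit (if b then cert_table_odd c else cert_table_even c)
            (N.of_nat (nat_of_bits s)).

Definition certificate_ok (rule : nat) (c : certificate) : bool :=
  let: Certificate delay width speed offset _ _ := c in
  [&& speed <= 2, offset + width <= 2 * delay + 1,
      all (fun w => pred_eca rule delay w ==
                    cert_phi c (odd delay) (window offset width w))
          (bitseqs (2 * delay + 1)) &
      all (fun u => (cert_phi c true (eca_step rule u) ==
                     cert_phi c false (window speed width u)) &&
                    (cert_phi c false (eca_step rule u) ==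
                     cert_phi c true (window speed width u)))
          (bitseqs width.+2)].

Lemma certificate_D_bounded rule c : certificate_ok rule c ->
  exists C, forall n, D_word_le (2 * n + 1) (pred_eca rule n) C.
Proof.
case: c => delay width speed offset t_odd t_even.
set c := Certificate _ _ _ _ _ _ => /and4P [speed_le2 fits start step].
apply: (D_pred_eca_bounded (phi := cert_phi c) speed_le2 fits).
  by move=> w /(all_bitseqsP start) /eqP.
by move=> b u /(all_bitseqsP step) /andP [/eqP step1 /eqP step0]; case: b.
Qed.

Definition rule_certificates : seq (nat * certificate) := [::
  (0, Certificate 1 1 0 0 0x0 0x0);
  (1, Certificate 2 5 1 0 0x30003 0xFEFCFEF0);
  (2, Certificate 1 3 2 0 0x2 0x2);
  (4, Certificate 1 3 1 0 0x4 0x4);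
  (8, Certificate 2 1 0 0 0x0 0x0);
  (10, Certificate 1 3 2 0 0xA 0xA);
  (12, Certificate 1 2 1 0 0x2 0x2);
  (19, Certificate 2 5 1 0 0x30F031F 0xFCF0FCE0);
  (24, Certificate 2 5 0 0 0x7E000 0x7E000);
  (34, Certificate 1 2 2 1 0x2 0x2);
  (36, Certificate 2 5 1 0 0x8000010 0x8000010);
  (38, Certificate 2 5 2 0 0x26062206 0x2A0A220A);
  (42, Certificate 1 3 2 0 0x2A 0x2A);
  (46, Certificate 2 5 2 0 0x2E0E220E 0x2E0E220E);
  (72, Certificate 2 5 1 0 0x403040 0x403040);
  (76, Certificate 1 3 1 0 0x4C 0x4C);
  (108, Certificate 3 7 1 0 0xF90C3000300FF000F00C3000390FF00 0xF00C3003300FF000F00C3003300FF00);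
  (127, Certificate 2 5 1 0 0x3FFF3FFF 0xF080C080);
  (138, Certificate 1 3 2 0 0x8A 0x8A);
  (200, Certificate 1 3 1 0 0xC8 0xC8)].

Definition certificate_of (rule : nat) : option certificate :=
  ohead [seq rc.2 | rc <- rule_certificates & rc.1 == rule].

Lemma rule_list_certified :
  all (fun rule => oapp (certificate_ok rule) false (certificate_of rule)) rule_list.
Proof. by vm_compute. Qed.

Theorem mainTheorem2 (N : nat) :
  N \in rule_list ->
  exists C : nat, forall n : nat, 0 < n ->
    D_word_le (2 * n + 1) (pred_eca N n) C.
Proof.
move/(allP rule_list_certified); case: (certificate_of N) => //= c.
by move/certificate_D_bounded=> [C D_C]; exists C => n _.
Qed.
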